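(* Let $\mathfrak{g}$ be a finite-dimensional complex Lie algebra admitting an inner CPA-structure $x\cdot y=[\phi(x),y]$ with $\phi$ a Lie algebra endomorphism of $\mathfrak{g}$. Then $\mathfrak{g}$ decomposes as a direct sum $\mathfrak{g}=\mathfrak{n}\oplus\mathfrak{h}$ of $\phi$-invariant ideals (ideals both of the Lie algebra and of the algebra $(\mathfrak{g},\cdot)$) such that: (1) $\phi|_{\mathfrak{n}}$ is a nilpotent endomorphism of $\mathfrak{n}$ and the induced CPA-structure on $\mathfrak{n}$ is nil-inner; (2) $\phi|_{\mathfrak{h}}$ is an automorphism of $\mathfrak{h}$, and $[[\mathfrak{h},\mathfrak{h}],[\mathfrak{h},\mathfrak{h}]]=0$.
   Context: A CPA-structure on a Lie algebra $\mathfrak{g}$ is a bilinear product $x\cdot y$ on $\mathfrak{g}$ satisfying, for all $x,y,z$: $x\cdot y=y\cdot x$; $[x,y]\cdot z=x\cdot(y\cdot z)-y\cdot(x\cdot z)$; $x\cdot[y,z]=[x\cdot y,z]+[y,x\cdot z]$. It is called inner if $x\cdot y=[\phi(x),y]$ for some Lie algebra homomorphism $\phi:\mathfrak{g}\to\mathfrak{g}$, and nil-inner if it can be written in this form with $\phi$ a nilpotent Lie algebra homomorphism. A subspace $I$ is an ideal if it is both a Lie ideal ($[\mathfrak{g},I]\subseteq I$) and an algebra ideal ($\mathfrak{g}\cdot I\subseteq I$). *)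

From HB Require Import structures.
From mathcomp Require Import all_boot all_order all_algebra.
From mathcomp Require Import reals.
From mathcomp Require Import complex.

Set Implicit Arguments.
Unset Strict Implicit.
Unset Printing Implicit Defensive.

Import Order.TTheory GRing.Theory Num.Theory.
Local Open Scope ring_scope.

Section Lie.
Variable (K : fieldType) (V : vectType K).
Implicit Types (br prod : V -> V -> V) (U W : {vspace V}).

Definition is_lie_bracket br : Prop :=
  [/\ (forall (a : K) x y z, br (a *: x + y) z = a *: br x z + br y z),
      (forall (a : K) x y z, br x (a *: y + z) = a *: br x y + br x z),
      (forall x, br x x = 0) &
      (forall x y z, br x (br y z) + br y (br z x) + br z (br x y) = 0)].

Definition lie_hom br (phi : {linear V -> V}) : Prop :=
  forall x y, phi (br x y) = br (phi x) (phi y).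

Definition is_CPA br prod : Prop :=
  [/\ (forall (a : K) x y z, prod (a *: x + y) z = a *: prod x z + prod y z),
      (forall (a : K) x y z, prod x (a *: y + z) = a *: prod x y + prod x z),
      (forall x y, prod x y = prod y x),
      (forall x y z, prod (br x y) z = prod x (prod y z) - prod y (prod x z)) &
      (forall x y z, prod x (br y z) = br (prod x y) z + br y (prod x z))].

Definition inner_prod br (phi : V -> V) : V -> V -> V :=
  fun x y => br (phi x) y.

Definition is_ideal br prod U : Prop :=
  (forall x y, y \in U -> br x y \in U) /\
  (forall x y, y \in U -> prod x y \in U).

Definition stable_by (phi : V -> V) U : Prop :=
  forall x, x \in U -> phi x \in U.

Definition nilpotent_on (phi : V -> V) U : Prop :=
  exists k : nat, forall x, x \in U -> iter k phi x = 0.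

Definition bij_on_space (phi : V -> V) U : Prop :=
  (forall x y, x \in U -> y \in U -> phi x = phi y -> x = y) /\
  (forall y, y \in U -> exists2 x, x \in U & phi x = y).

Definition nil_inner_on br prod U : Prop :=
  exists psi : {linear V -> V},
    [/\ stable_by psi U,
        (forall x y, x \in U -> y \in U -> psi (br x y) = br (psi x) (psi y)),
        nilpotent_on psi U &
        (forall x y, x \in U -> y \in U -> prod x y = br (psi x) y)].

(* [U, W] : the subspace spanned by all brackets [u, w], u in U, w in W
   (spanned by brackets of basis vectors, br being bilinear). *)
Definition lie_prod br U W : {vspace V} :=
  (<< [seq br u w | u <- vbasis U, w <- vbasis W] >>)%VS.

End Lie.

From HB Require Import structures.
From mathcomp Require Import all_boot all_order all_algebra.
From mathcomp Require Import reals.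
From mathcomp Require Import complex.
From mathcomp Require Import zify.

(* Commutativity of the inner product x . y = [phi x, y] says exactly that phi
   is skew for the bracket: [phi x, y] = - [x, phi y].  Take the Fitting
   decomposition of phi, n = ker phi^N and h = im phi^N for N large.  Both are
   ideals: n because phi^N is a Lie morphism, h because skewness gives
   [x, phi^(2N) u] = (-1)^N phi^N [x, u].  Skewness and the Jacobi identity
   also show that phi and phi^3 agree after bracketing with an element of
   [g, g], and that phi acts as -1 on [[g, g], phi g].  From this, every
   [[phi^2 x, y], [phi z, phi t]] equals its own negative; since h lies in the
   image of phi^2, [[h, h], [h, h]] = 0. *)

Set Implicit Arguments.
Unset Strict Implicit.
Unset Printing Implicit Defensive.

Import GRing.Theory Num.Theory.
Local Open Scope ring_scope.

Section FittingDecomposition.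
Variables (K : fieldType) (V : vectType K) (f : {linear V -> V}).

Definition iter_lfun k : 'End(V) := iter k (comp_lfun (linfun f)) \1%VF.
Definition iter_limg k := limg (iter_lfun k).
Definition iter_lker k := lker (iter_lfun k).

Lemma iter_lfunE k x : iter_lfun k x = iter k f x.
Proof.
elim: k => [|k IHk] /=; first by rewrite id_lfunE.
by rewrite comp_lfunE lfunE IHk.
Qed.

Lemma iter_limgP k x : reflect (exists u, x = iter k f u) (x \in iter_limg k).
Proof.
apply: (iffP memv_imgP) => [[u _ ->]|[u ->]]; exists u; rewrite ?iter_lfunE //.
by rewrite memvf.
Qed.

Lemma iter_lkerE k x : (x \in iter_lker k) = (iter k f x == 0).
Proof. by rewrite memv_ker iter_lfunE. Qed.

Lemma iter_limgS k : iter_limg k.+1 = (linfun f @: iter_limg k)%VS.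
Proof. by rewrite /iter_limg /= limg_comp. Qed.

Lemma iter_limg_antitone m k : (m <= k)%N -> (iter_limg k <= iter_limg m)%VS.
Proof.
move=> le_mk; apply/subvP => x /iter_limgP [u ->]; apply/iter_limgP.
by exists (iter (k - m) f u); rewrite -iterD subnKC.
Qed.

Lemma iter_limg_stable k : stable_by f (iter_limg k).
Proof.
by move=> x /iter_limgP [u ->]; apply/iter_limgP; exists (f u); rewrite -iterSr iterS.
Qed.

Lemma iter_lker_stable k : stable_by f (iter_lker k).
Proof. by move=> x; rewrite !iter_lkerE -iterSr iterS => /eqP ->; rewrite linear0. Qed.

Lemma iter_lker_nilpotent k : nilpotent_on f (iter_lker k).
Proof. by exists k => x; rewrite iter_lkerE => /eqP. Qed.

Lemma iter_limg_dim_drop m :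
    (forall k, (k < m)%N -> iter_limg k.+1 != iter_limg k) ->
  (\dim (iter_limg m) + m <= \dim (iter_limg 0))%N.
Proof.
elim: m => [|m IHm] drop; first by rewrite addn0.
have := IHm (fun k lt_km => drop k (ltnW lt_km)).
have := drop m (ltnSn m); rewrite eqEdim iter_limg_antitone //= -ltnNge.
lia.
Qed.

Lemma iter_limg_stationary :
  exists N, forall k, (N <= k)%N -> iter_limg k = iter_limg N.
Proof.
pose d := \dim (iter_limg 0).
have [/existsP [k /eqP eqk] | /existsPn drop] :=
  boolP [exists k : 'I_d.+1, iter_limg k.+1 == iter_limg k].
  exists k => j /subnK <-; elim: (j - k)%N => // i IHi.
  by rewrite addSn iter_limgS IHi -iter_limgS eqk.
have := @iter_limg_dim_drop d.+1 (fun k lt_kd => drop (Ordinal lt_kd)); lia.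
Qed.

Section Stationary.
Variable N : nat.
Hypothesis iter_limg_N : forall k, (N <= k)%N -> iter_limg k = iter_limg N.

Lemma iter_limg_inj : {in iter_limg N &, injective f}.
Proof.
have cap0 : (iter_limg N :&: lker (linfun f) = 0)%VS.
  have := limg_ker_dim (linfun f) (iter_limg N).
  rewrite -iter_limgS iter_limg_N // => /eqP.
  by rewrite -{2}[\dim (iter_limg N)]add0n eqn_add2r dimv_eq0 => /eqP.
move=> x y xN yN fxy; apply/eqP; rewrite -subr_eq0 -memv0 -cap0 memv_cap.
by rewrite memvB //= memv_ker lfunE /= linearB fxy subrr.
Qed.

Lemma iter_limg_bij : bij_on_space f (iter_limg N).
Proof.
split; first exact: iter_limg_inj.
move=> y; rewrite -{1}(@iter_limg_N N.+1) // => /iter_limgP [u ->].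
exists (iter N f u) => //; apply/iter_limgP; by exists u.
Qed.

Lemma iter_lker_limg_cap : (iter_lker N :&: iter_limg N = 0)%VS.
Proof.
have iter_eq0 k x : x \in iter_limg N -> iter k f x = 0 -> x = 0.
  elim: k x => // k IHk x xN; rewrite iterSr => /(IHk _ (iter_limg_stable xN)) fx0.
  by apply: iter_limg_inj; rewrite ?mem0v // fx0 linear0.
apply/eqP; rewrite -subv0; apply/subvP => x; rewrite memv_cap memv0 iter_lkerE.
by case/andP=> /eqP fx0 xN; rewrite (iter_eq0 N x xN fx0).
Qed.

Lemma iter_lker_limg_sum : (iter_lker N + iter_limg N = fullv)%VS.
Proof.
apply/eqP; rewrite eqEdim subvf /=.
have := dimv_sum_cap (iter_lker N) (iter_limg N).
rewrite iter_lker_limg_cap dimv0 addn0 => ->.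
by have := limg_ker_dim (iter_lfun N) fullv; rewrite capfv addnC => ->.
Qed.

End Stationary.
End FittingDecomposition.

Section InnerCPA.
Variables (K : fieldType) (V : vectType K).
Variables (br : V -> V -> V) (phi : {linear V -> V}).
Hypothesis br_lie : is_lie_bracket br.
Hypothesis phi_hom : lie_hom br phi.
Hypothesis inner_prodC : forall x y, br (phi x) y = br (phi y) x.

Lemma br_linearl z : linear (br^~ z).
Proof. by case: br_lie => brl _ _ _ a x y; exact: brl. Qed.

Lemma br_linearr x : linear (br x).
Proof. by case: br_lie => _ brr _ _ a y z; exact: brr. Qed.

Definition adr z : {linear V -> V} :=
  HB.pack (br^~ z) (GRing.isLinear.Build K V V *:%R _ (br_linearl z)).
Definition ad x : {linear V -> V} :=
  HB.pack (br x) (GRing.isLinear.Build K V V *:%R _ (br_linearr x)).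

Lemma br0r x : br x 0 = 0. Proof. exact: (linear0 (ad x)). Qed.

Lemma brDl x y z : br (x + y) z = br x z + br y z.
Proof. exact: (linearD (adr z)). Qed.

Lemma brDr x y z : br x (y + z) = br x y + br x z.
Proof. exact: (linearD (ad x)). Qed.

Lemma brNl x y : br (- x) y = - br x y. Proof. exact: (linearN (adr y)). Qed.

Lemma brNr x y : br x (- y) = - br x y. Proof. exact: (linearN (ad x)). Qed.

Lemma brC x y : br x y = - br y x.
Proof.
case: br_lie => _ _ brxx _; apply/eqP; rewrite -addr_eq0.
by rewrite -(brxx (x + y)) brDl !brDr !brxx add0r addr0.
Qed.

Lemma br_jacobi x y z : br x (br y z) = br (br x y) z + br y (br x z).
Proof.
case: br_lie => _ _ _ jacobi; have := jacobi x y z.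
rewrite (brC z x) brNr (brC z) => /eqP; rewrite -addrA -opprD subr_eq0 => /eqP ->.
by rewrite addrC.
Qed.

Lemma br_jacobil x y z : br (br x y) z = br x (br y z) - br y (br x z).
Proof. by rewrite br_jacobi addrK. Qed.

Lemma br_phi_skew x y : br (phi x) y = - br x (phi y).
Proof. by rewrite inner_prodC brC. Qed.

Lemma iter_phi_br k x y : iter k phi (br x y) = br (iter k phi x) (iter k phi y).
Proof. by elim: k => //= k ->; rewrite phi_hom. Qed.

Lemma br_iter_phi k x y : br x (iter k phi y) = (-1) ^+ k *: br (iter k phi x) y.
Proof.
elim: k x => [|k IHk] x /=; first by rewrite expr0 scale1r.
by rewrite -[br x _]opprK -br_phi_skew IHk -iterSr exprS mulN1r scaleNr.
Qed.

Lemma br_phi_br_phi x y z :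
  br (phi x) (br (phi y) z) = - br x (br y (phi (phi (phi z)))).
Proof. by rewrite br_phi_skew phi_hom !br_phi_skew !brNr opprK. Qed.

Lemma br_comm_phi3 a b c : br (br a b) (phi c) = br (br a b) (phi (phi (phi c))).
Proof.
apply: oppr_inj; rewrite -br_phi_skew phi_hom br_jacobil !br_phi_br_phi.
by rewrite (br_jacobil a b) opprB opprK addrC.
Qed.

Lemma phi_br_comm_phi a b c : phi (br (br a b) (phi c)) = - br (br a b) (phi c).
Proof. by rewrite phi_hom br_phi_skew -br_comm_phi3. Qed.

Lemma br_phi2_eigenN1 x e : phi e = - e -> br (phi (phi x)) e = br x e.
Proof.
by move=> phie; rewrite br_phi_skew phie brNr opprK br_phi_skew phie brNr opprK.
Qed.

Lemma br_comm_br_phi3l a b x y :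
  br (br a b) (br (phi (phi (phi x))) (phi y)) = br (br a b) (br (phi x) (phi y)).
Proof.
by rewrite !(br_jacobi (br a b)) -br_comm_phi3 br_phi2_eigenN1 ?phi_br_comm_phi.
Qed.

Lemma br_comm_br_phi3r a b x y :
  br (br a b) (br (phi x) (phi (phi (phi y)))) = br (br a b) (br (phi x) (phi y)).
Proof. by rewrite (brC (phi x)) (brC (phi x) (phi y)) !brNr br_comm_br_phi3l. Qed.

Lemma br_phi_comm_br_phi a b x y :
  br (phi (br a b)) (br (phi x) (phi y)) = br (br a b) (br (phi x) (phi y)).
Proof.
by rewrite br_phi_skew phi_hom (br_phi_skew (phi x)) brNr opprK br_comm_br_phi3r.
Qed.

Lemma br_metabelian_phi (two_neq0 : 2%:R != 0 :> K) x y z t :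
  br (br (phi (phi x)) y) (br (phi z) (phi t)) = 0.
Proof.
set u := br _ _.
have uN : u = - u.
  rewrite {1}/u br_phi_skew brNl; congr (- _).
  by rewrite brC -br_comm_br_phi3l -brC -phi_hom br_phi_comm_br_phi.
have : 2%:R *: u = 0 by rewrite scaler_nat mulr2n {1}uN addNr.
by move/eqP; rewrite scaler_eq0 (negPf two_neq0) => /eqP.
Qed.

Lemma br_span_eq0 (A B : seq V) :
    {in A & B, forall a b, br a b = 0} ->
  {in <<A>>%VS & <<B>>%VS, forall p q, br p q = 0}.
Proof.
move=> brAB p q pA qB.
have Bp : (<<B>> <= lker (linfun (ad p)))%VS.
  apply/span_subvP => b bB; rewrite memv_ker lfunE /=.
  have Ab : (<<A>> <= lker (linfun (adr b)))%VS.
    by apply/span_subvP => a aA; rewrite memv_ker lfunE /= brAB.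
  by move/subvP/(_ p pA): Ab; rewrite memv_ker lfunE.
by move/subvP/(_ q qB): Bp; rewrite memv_ker lfunE => /eqP.
Qed.

Lemma lie_prod_metabelian (two_neq0 : 2%:R != 0 :> K) (U : {vspace V}) :
  (U <= iter_limg phi 2)%VS -> lie_prod br (lie_prod br U U) (lie_prod br U U) = 0%VS.
Proof.
move=> /subvP U_phi2.
have phi2P u : u \in U -> exists v, u = phi (phi v).
  by move=> /U_phi2 /iter_limgP.
have brUU0 : {in [seq br u w | u <- vbasis U, w <- vbasis U] &,
               forall p q, br p q = 0}.
  move=> _ _ /allpairsP [[u w] [/vbasis_mem uU _ ->]]
    /allpairsP [[u' w'] [u'U w'U ->]] /=.
  have [x ->] := phi2P u uU.
  have [z ->] := phi2P u' (vbasis_mem u'U); have [t ->] := phi2P w' (vbasis_mem w'U).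
  exact: br_metabelian_phi.
apply/eqP; rewrite -subv0; apply/span_subvP => _ /allpairsP [[p q] [pP qP ->]] /=.
by rewrite memv0; apply/eqP/(br_span_eq0 brUU0); exact: vbasis_mem.
Qed.

Lemma iter_lker_lie_ideal k x y : y \in iter_lker phi k -> br x y \in iter_lker phi k.
Proof. by rewrite !iter_lkerE iter_phi_br => /eqP ->; rewrite br0r. Qed.

Lemma iter_limg_lie_ideal k x y :
  y \in iter_limg phi (k + k) -> br x y \in iter_limg phi k.
Proof.
move=> /iter_limgP [u ->]; rewrite iterD br_iter_phi -iter_phi_br.
by apply/memvZ/iter_limgP; exists (br x u).
Qed.

Lemma lie_ideal_inner_ideal (U : {vspace V}) :
  (forall x y, y \in U -> br x y \in U) -> is_ideal br (inner_prod br phi) U.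
Proof. by move=> U_ideal; split=> x y /U_ideal; rewrite /inner_prod. Qed.

Lemma iter_lker_nil_inner k : nil_inner_on br (inner_prod br phi) (iter_lker phi k).
Proof.
exists phi; split=> [|x y _ _||//]; [exact: iter_lker_stable | exact: phi_hom |].
exact: iter_lker_nilpotent.
Qed.

End InnerCPA.

Theorem theorem2p14 (R : realType) (V : vectType R[i])
    (br : V -> V -> V) (phi : {linear V -> V}) :
  is_lie_bracket br ->
  lie_hom br phi ->
  is_CPA br (inner_prod br phi) ->
  exists n h : {vspace V},
    [/\ (n + h)%VS = fullv /\ (n :&: h)%VS = 0%VS,
        is_ideal br (inner_prod br phi) n /\ is_ideal br (inner_prod br phi) h,
        stable_by phi n /\ stable_by phi h,
        nilpotent_on phi n /\ nil_inner_on br (inner_prod br phi) n &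
        bij_on_space phi h /\
          lie_prod br (lie_prod br h h) (lie_prod br h h) = 0%VS].
Proof.
move=> br_lie phi_hom [_ _ prodC _ _].
have phiC x y : br (phi x) y = br (phi y) x by exact: prodC.
have two_neq0 : 2%:R != 0 :> R[i] by rewrite pnatr_eq0.
have [N limgN] := iter_limg_stationary phi.
exists (iter_lker phi N), (iter_limg phi N); split.
- split; [exact: iter_lker_limg_sum | exact: iter_lker_limg_cap].
- split; apply: lie_ideal_inner_ideal => // x y; first exact: iter_lker_lie_ideal.
  rewrite -{1}(limgN (N + N)) ?leq_addr //; exact: iter_limg_lie_ideal.
- split; [exact: iter_lker_stable | exact: iter_limg_stable].
- split; [exact: iter_lker_nilpotent | exact: iter_lker_nil_inner].
- split; first exact: iter_limg_bij.
  apply: lie_prod_metabelian => //; rewrite -(limgN N.+2) ?leqW //.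
  exact: iter_limg_antitone.
Qed.
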